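(* Every Euclidean domain that does not contain a field (as a subring) is Egyptian.
   Context: A Euclidean function on an integral domain $D$ is a function $f: D\setminus\{0\} \to \mathbb{Z}$ such that for all nonzero $a,b \in D$: (1) $f(ab) \geq f(a)$, and (2) there exist $q,r \in D$ with $b = aq + r$ and either $r=0$ or $f(r) < f(a)$. A Euclidean domain is an integral domain admitting a Euclidean function. With $K$ the fraction field of $D$, $D$ is Egyptian if every nonzero element of $K$ is a sum of reciprocals of distinct nonzero elements of $D$. *)

From mathcomp Require Import all_boot all_order all_algebra.
From mathcomp Require Import fraction.
Set Implicit Arguments. Unset Strict Implicit. Unset Printing Implicit Defensive.
Import Order.TTheory GRing.Theory Num.Theory.
Local Open Scope ring_scope.

(* f : D \ {0} -> Z is a Euclidean function (values of f at 0 are irrelevant). *)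
Definition euclidean_function (D : idomainType) (f : D -> int) : Prop :=
  (forall a b : D, a != 0 -> b != 0 -> f a <= f (a * b)) /\
  (forall a b : D, a != 0 -> b != 0 ->
     exists q r : D, b = a * q + r /\ (r = 0 \/ f r < f a)).

Definition euclidean_domain (D : idomainType) : Prop :=
  exists f : D -> int, euclidean_function f.

Definition subfield_of (D : idomainType) (S : pred D) : Prop :=
  [/\ 1 \in S,
      (forall x y, x \in S -> y \in S -> x - y \in S),
      (forall x y, x \in S -> y \in S -> x * y \in S) &
      (forall x, x \in S -> x != 0 -> exists2 y, y \in S & x * y = 1)].

Definition contains_field (D : idomainType) : Prop :=
  exists S : pred D, subfield_of S.

Definition egyptian (D : idomainType) : Prop :=
  forall x : {fraction D}, x != 0 ->
    exists s : seq D, [/\ uniq s, all (fun d => d != 0) s &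
                          x = \sum_(d <- s) (tofrac d)^-1].

(* Write [x = a / b].  As D contains no field, some [N = n%:R] is a nonzero
   nonunit, and D has characteristic 0 (otherwise its prime field would be a
   subfield).  For a Euclidean function [f] one has [f (N ^+ k) >= f 1 + k], so
   for large [k] the division [N ^+ k = a q + r] has [q != 0] and [r = 0] or
   [f r < f a]; then [a = n ^ k * (1 / q) - r / q], and induction on [f a] writes
   [a], hence [a / b], as a sum of unit fractions [1 / d] with repetitions
   ([- (1 / d) = 1 / (- d)]).  Repetitions are removed in characteristic 0:
   [1 / e] is the sum of the [1 / (e m)] over any set of integers [m] with
   [sum 1 / m = 1], and such sets exist with all [m] beyond any bound (a
   harmonic segment completed by the greedy algorithm). *)

From mathcomp Require Import all_boot all_order all_algebra.
From mathcomp Require Import fraction zify ring lra.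
From mathcomp Require Import boolp.
Set Implicit Arguments. Unset Strict Implicit. Unset Printing Implicit Defensive.
Import Order.TTheory GRing.Theory Num.Theory.
Local Open Scope ring_scope.

Section UnitFractionSums.
Variable D : idomainType.
Local Notation K := {fraction D}.

Definition unit_fraction_sum (x : K) : Prop :=
  exists2 s : seq D, all (fun d => d != 0) s & x = \sum_(d <- s) (tofrac d)^-1.

Lemma unit_fraction_sum0 : unit_fraction_sum 0.
Proof. by exists [::]; rewrite ?big_nil. Qed.

Lemma unit_fraction_sumD x y :
  unit_fraction_sum x -> unit_fraction_sum y -> unit_fraction_sum (x + y).
Proof.
move=> [s s0 ->] [t t0 ->]; exists (s ++ t); first by rewrite all_cat s0 t0.
by rewrite big_cat.
Qed.

Lemma unit_fraction_sumN x : unit_fraction_sum x -> unit_fraction_sum (- x).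
Proof.
move=> [s s0 ->]; exists (map -%R s).
  by rewrite all_map; apply: sub_all s0 => d /=; rewrite oppr_eq0.
by rewrite big_map -sumrN; apply: eq_bigr => d _; rewrite tofracN invrN.
Qed.

Lemma unit_fraction_sumMn x n : unit_fraction_sum x -> unit_fraction_sum (x *+ n).
Proof.
move=> ux; elim: n => [|n IHn]; first by rewrite mulr0n; apply: unit_fraction_sum0.
by rewrite mulrS; apply: unit_fraction_sumD.
Qed.

Lemma unit_fraction_sum_inv e : e != 0 -> unit_fraction_sum (tofrac e)^-1.
Proof. by move=> e0; exists [:: e]; rewrite /= ?e0 ?big_seq1. Qed.

Lemma unit_fraction_sum_divr x e :
  e != 0 -> unit_fraction_sum x -> unit_fraction_sum (x / tofrac e).
Proof.
move=> e0 [s s0 ->]; exists (map ( *%R^~ e) s).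
  by rewrite all_map; apply: sub_all s0 => d /= d0; rewrite mulf_neq0.
by rewrite big_map mulr_suml; apply: eq_bigr => d _; rewrite tofracM invfM.
Qed.

End UnitFractionSums.

Section EuclideanFunction.
Variables (D : idomainType) (f : D -> int).
Hypothesis f_euclid : euclidean_function f.

Lemma euclid_f1_le a : a != 0 -> f 1 <= f a.
Proof.
by move=> a0; have := f_euclid.1 1 a; rewrite mul1r; apply; rewrite ?oner_neq0.
Qed.

Lemma euclid_lt_mulr_nonunit b c :
  b \notin GRing.unit -> b != 0 -> c != 0 -> f c < f (c * b).
Proof.
move=> bNU b0 c0.
have [q [r [cbE r_small]]] := f_euclid.2 _ _ (mulf_neq0 c0 b0) c0.
have rE : r = c * (1 - b * q).
  by rewrite mulrBr mulr1 mulrA [X in X - _]cbE addrAC subrr add0r.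
have bqN1 : 1 - b * q != 0.
  apply: contraNneq bNU => /eqP; rewrite subr_eq0 => /eqP bq1.
  by apply/unitrPr; exists q.
have r0 : r != 0 by rewrite rE mulf_neq0.
case: r_small => [/eqP|]; first by rewrite (negPf r0).
by apply: le_lt_trans; rewrite rE f_euclid.1.
Qed.

Lemma euclid_exprn_ge N k :
  N \notin GRing.unit -> N != 0 -> f 1 + k%:Z <= f (N ^+ k).
Proof.
move=> NNU N0; elim: k => [|k IHk]; first by rewrite expr0 addr0.
rewrite exprSr -addn1 PoszD addrA lezD1.
exact: le_lt_trans IHk (euclid_lt_mulr_nonunit NNU N0 (expf_neq0 k N0)).
Qed.

Lemma euclid_divide_power N a k :
  N \notin GRing.unit -> N != 0 -> a != 0 -> f a <= f 1 + k%:Z ->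
  exists q r, [/\ q != 0, N ^+ k = a * q + r & r = 0 \/ f r < f a].
Proof.
move=> NNU N0 a0 le_a.
have Nk0 : N ^+ k != 0 by rewrite expf_neq0.
have [q [r [NkE r_small]]] := f_euclid.2 _ _ a0 Nk0.
exists q, r; split => //; apply/eqP => q0.
move: NkE r_small; rewrite q0 mulr0 add0r => <- [/eqP|]; first by rewrite (negPf Nk0).
by rewrite ltNge (le_trans le_a (euclid_exprn_ge k NNU N0)).
Qed.

Lemma unit_fraction_sum_tofrac (n : nat) (a : D) :
  (n%:R : D) != 0 -> (n%:R : D) \notin GRing.unit -> unit_fraction_sum (tofrac a).
Proof.
move=> n0 nNU.
have [->|a0] := eqVneq a 0; first by rewrite tofrac0; apply: unit_fraction_sum0.
suff IH m (b : D) : b != 0 -> f b < f 1 + m%:Z -> unit_fraction_sum (tofrac b).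
  by apply: (IH (absz (f a - f 1)).+1 a a0); lia.
elim: m b => [|m IHm] b b0; first by rewrite addr0 ltNge euclid_f1_le.
rewrite -addn1 PoszD addrA ltzD1 => le_b.
have [q [r [q0 powE r_small]]] := euclid_divide_power nNU n0 b0 le_b.
have qF0 : tofrac q != 0 by rewrite tofrac_eq0.
have bE : tofrac b = (tofrac q)^-1 *+ (n ^ m) - tofrac r / tofrac q.
  rewrite -mulr_natl -mulrBl -(rmorph_nat (@tofrac D)) natrX powE.
  by rewrite rmorphD addrK rmorphM mulfK.
rewrite bE; apply: unit_fraction_sumD.
  by apply: unit_fraction_sumMn; apply: unit_fraction_sum_inv.
apply: unit_fraction_sumN.
have [->|r0] := eqVneq r 0; first by rewrite tofrac0 mul0r; apply: unit_fraction_sum0.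
apply: unit_fraction_sum_divr q0 (IHm r r0 _).
by case: r_small => [/eqP|lt_r]; [rewrite (negPf r0) | apply: lt_le_trans le_b].
Qed.
End EuclideanFunction.

(* Fibonacci-Sylvester: for the least [c] with [1 / c <= a / b], the remainder
   [a / b - 1 / c = (c a - b) / (b c)] has a smaller numerator [c a - b < a]. *)
Lemma egyptian_greedy (a b : nat) : (0 < a)%N -> (a <= b)%N ->
  exists M : seq nat, [/\ uniq M, all (fun m => b <= a * m)%N M &
    a%:R / b%:R = \sum_(m <- M) (m%:R)^-1 :> rat].
Proof.
elim/ltn_ind: a b => a IHa b a_gt0 le_ab.
pose c := ((b + a.-1) %/ a)%N.
have := divn_eq (b + a.-1) a; have := ltn_pmod (b + a.-1) a_gt0; rewrite -/c.
move=> mod_lt cE; have le_b_ca : (b <= c * a)%N by lia.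
have lt_ca : (c * a < b + a)%N by lia.
have c_gt0 : (0 < c)%N by nia.
have b0 : b%:R != 0 :> rat by rewrite pnatr_eq0; lia.
have c0 : c%:R != 0 :> rat by rewrite pnatr_eq0; lia.
have [ca_b|ca_b] := eqVneq (c * a - b)%N 0%N.
  exists [:: c]; rewrite /= andbT mulnC le_b_ca big_seq1; split=> //.
  have -> : b = (c * a)%N by lia.
  by rewrite natrM invfM mulrCA mulfV ?mulr1 // pnatr_eq0; lia.
have [M [uM geM sumM]] := IHa (c * a - b)%N ltac:(lia) (b * c)%N ltac:(lia) ltac:(nia).
exists (c :: M); split.
- by rewrite /= uM andbT; apply: contraL le_ab => /(allP geM); nia.
- rewrite /= mulnC le_b_ca; apply: sub_all geM => m; nia.
- rewrite big_cons -sumM natrB // !natrM; field; exact/andP.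
Qed.

Lemma harmonic_block_ge_half (B : nat) : (0 < B)%N ->
  1 / 2 <= \sum_(B.+1 <= k < (B * 2).+1) (k%:R : rat)^-1.
Proof.
move=> B_gt0; apply: le_trans (_ : \sum_(B.+1 <= k < (B * 2).+1) ((B * 2)%:R)^-1 <= _).
  rewrite sumr_const_nat subSS (_ : (B * 2 - B = B)%N); last by lia.
  have B0 : B%:R != 0 :> rat by rewrite pnatr_eq0 -lt0n.
  by rewrite -[X in _ <= X]mulr_natl natrM invfM mulrA mulfV ?mul1r.
apply: ler_sum_nat => k /andP[lt_Bk le_k2B] /=.
by rewrite lef_pV2 ?posrE ?ltr0n ?ler_nat //; lia.
Qed.

Lemma harmonic_ge1 (B : nat) : (0 < B)%N ->
  1 <= \sum_(B.+1 <= k < (B * 4).+1) (k%:R : rat)^-1.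
Proof.
move=> B_gt0; rewrite (@big_cat_nat _ _ _ (B * 2).+1) /=; [|lia|lia].
have := harmonic_block_ge_half B_gt0.
have := @harmonic_block_ge_half (B * 2) ltac:(lia).
rewrite -mulnA; lra.
Qed.

Lemma egyptian_greedy_rat (r : rat) : 0 < r <= 1 ->
  exists M : seq nat, [/\ uniq M, all (fun m => 1 <= r * m%:R) M &
    r = \sum_(m <- M) (m%:R)^-1].
Proof.
case/andP=> r_gt0 r_le1.
have [a aE] : exists a : nat, numq r = a.
  by exists `|numq r|%N; rewrite gez0_abs ?ltW ?numq_gt0.
have [b bE] : exists b : nat, denq r = b.
  by exists `|denq r|%N; rewrite gez0_abs ?ltW.
have rE : r = a%:R / b%:R by rewrite -[LHS]divq_num_den aE bE.
have b_gt0 : (0 < b)%N by rewrite -ltz_nat -bE.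
have a_gt0 : (0 < a)%N by rewrite -ltz_nat -aE numq_gt0.
have le_ab : (a <= b)%N.
  by rewrite -(ler_nat rat) -[b%:R]mul1r -ler_pdivrMr ?ltr0n // -rE.
have [M [uM geM sumM]] := egyptian_greedy a_gt0 le_ab.
exists M; split; rewrite ?rE //; apply: sub_all geM => m /= le_b_am.
by rewrite mulrAC ler_pdivlMr ?ltr0n // mul1r -natrM ler_nat.
Qed.

(* [1 / (T + 1) + ... + 1 / U] is the longest harmonic segment below 1; the
   greedy algorithm completes it with denominators beyond [U]. *)
Lemma egyptian_one_above (T : nat) : exists M : seq nat,
  [/\ uniq M, all (fun m => T < m)%N M & \sum_(m <- M) (m%:R : rat)^-1 = 1].
Proof.
pose H U := \sum_(T.+1 <= k < U.+1) (k%:R : rat)^-1.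
have H_ge1 : exists V, 1 <= H V.
  exists (T.+1 * 4)%N; rewrite /H big_ltn; last by rewrite ltnS leq_pmulr.
  by apply: ler_wpDl; [rewrite invr_ge0 | apply: harmonic_ge1].
case: (ex_minnP H_ge1) => -[|U]; first by rewrite /H big_geq.
move=> le1_HU1 H_min.
have leTU : (T <= U)%N by rewrite leqNgt; apply: contraL le1_HU1 => ?; rewrite /H big_geq.
have HU_lt1 : H U < 1 by rewrite ltNge; apply: contraL (ltnSn U) => /H_min; rewrite ltnNge.
rewrite /H big_nat_recr //= -/(H U) -lerBlDl in le1_HU1.
set r := 1 - H U in le1_HU1.
have r_gt0 : 0 < r by rewrite subr_gt0.
have [|M [uM geM sumM]] := @egyptian_greedy_rat r.
  by rewrite r_gt0 (le_trans le1_HU1) // invf_le1 ?ler1n.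
have gtUM m : m \in M -> (U < m)%N.
  move=> /(allP geM) le1_rm; rewrite -(ler_nat rat) -(ler_pM2l r_gt0).
  by rewrite (le_trans _ le1_rm) // -ler_pdivlMr ?ltr0n // div1r.
exists (index_iota T.+1 U.+1 ++ M); split.
- rewrite cat_uniq iota_uniq uM andbT; apply/hasPn => m /gtUM ltUm.
  by rewrite mem_index_iota ltnS [(m <= U)%N]leqNgt ltUm andbF.
- rewrite all_cat; apply/andP; split; apply/allP => m.
    by rewrite mem_index_iota => /andP[].
  by move=> /gtUM; apply: leq_ltn_trans leTU.
- by rewrite big_cat /= -/(H U) -sumM /r addrC subrK.
Qed.

Lemma pchar0_eqr_nat (R : idomainType) : [pchar R] =i pred0 ->
  forall m n : nat, (m%:R == n%:R :> R) = (m == n).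
Proof.
move=> R0 m n; wlog le_mn : m n / (m <= n)%N.
  by move=> wlog_le; case: (leqP m n) => [|/ltnW] /wlog_le; rewrite 1?eq_sym => ->.
rewrite eqn_leq le_mn /= eq_sym -subr_eq0 -natrB // (pcharf0P R).1 // subn_eq0.
Qed.

Lemma sum_invn_mul_prod (F : fieldType) (M : seq nat) :
  [pchar F] =i pred0 -> all (fun m => 0 < m)%N M ->
  (\sum_(m <- M) (m%:R : F)^-1) * (\prod_(i <- M) i)%:R =
    (\sum_(m <- M) (\prod_(i <- M) i) %/ m)%N%:R.
Proof.
move=> F0 M_gt0; rewrite natr_sum mulr_suml; apply: eq_big_seq => m mM.
have m0 : m%:R != 0 :> F by rewrite (pcharf0P F).1 // -lt0n (allP M_gt0).
by rewrite pchar0_natf_div ?(big_rem m mM) ?dvdn_mulr //= mulrC.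
Qed.

Lemma egyptian_one_above_pchar0 (F : fieldType) (T : nat) : [pchar F] =i pred0 ->
  exists M : seq nat,
    [/\ uniq M, all (fun m => T < m)%N M & \sum_(m <- M) (m%:R : F)^-1 = 1].
Proof.
move=> F0; have [M [uM gtM sumM]] := egyptian_one_above T.
have M_gt0 : all (fun m => 0 < m)%N M by apply: sub_all gtM => m; apply: leq_ltn_trans.
exists M; split => //.
have P0 : (\prod_(i <- M) i)%:R != 0 :> F.
  by rewrite (pcharf0P F).1 // -lt0n big_seq prodn_cond_gt0 // => i /(allP M_gt0).
have sumE : (\prod_(i <- M) i = \sum_(m <- M) (\prod_(i <- M) i) %/ m)%N.
  apply/eqP; rewrite -(pchar0_eqr_nat (pchar_num rat)).
  by rewrite -(sum_invn_mul_prod (pchar_num rat) M_gt0) sumM mul1r.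
by apply: (mulIf P0); rewrite sum_invn_mul_prod // -sumE mul1r.
Qed.

Lemma injective_eventually_notin (T : eqType) (g : nat -> T) (s : seq T) :
  injective g -> exists N, forall m, (N < m)%N -> g m \notin s.
Proof.
move=> g_inj; elim: s => [|x s [N gN]]; first by exists 0%N.
have [[k <-]|gNx] := pselect (exists k, g k = x).
  exists (maxn N k) => m; rewrite gtn_max => /andP[ltNm ltkm].
  by rewrite inE negb_or (inj_eq g_inj) gN // andbT neq_ltn ltkm orbT.
exists N => m /gN; rewrite inE negb_or => ->; rewrite andbT.
by apply/eqP => gmx; apply: gNx; exists m.
Qed.

Section CharacteristicZero.
Variable D : idomainType.
Hypothesis D0 : [pchar D] =i pred0.
Local Notation K := {fraction D}.

Lemma pchar0_fraction : [pchar K] =i pred0.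
Proof.
by apply/pcharf0P => n; rewrite -(rmorph_nat (@tofrac D)) tofrac_eq0 (pcharf0P D).1.
Qed.

(* [1 / e] is the sum of the [1 / (e m)] over a set of [m] with [sum 1 / m = 1],
   all beyond the finitely many [m] with [e m] in [F]. *)
Lemma inv_tofrac_egyptian_avoid (F : seq D) e : e != 0 ->
  exists L : seq D, [/\ uniq L, all (fun l => (l != 0) && (l \notin F)) L &
    (tofrac e)^-1 = \sum_(l <- L) (tofrac l)^-1].
Proof.
move=> e0; have emul_inj : injective (fun m : nat => e * m%:R).
  by move=> m k /(mulfI e0) /eqP; rewrite pchar0_eqr_nat // => /eqP.
have [N eN] := injective_eventually_notin F emul_inj.
have [M [uM gtM sumM]] := egyptian_one_above_pchar0 N pchar0_fraction.
exists (map (fun m : nat => e * m%:R) M); split.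
- by rewrite map_inj_uniq.
- rewrite all_map; apply/allP => m /(allP gtM) ltNm /=.
  by rewrite mulf_neq0 ?eN // (pcharf0P D).1 // -lt0n (leq_ltn_trans _ ltNm).
- rewrite big_map -[LHS]mulr1 -sumM mulr_sumr; apply: eq_bigr => m _.
  by rewrite rmorphM rmorph_nat invfM.
Qed.

Lemma unit_fraction_sum_egyptian (x : K) : unit_fraction_sum x ->
  exists L : seq D, [/\ uniq L, all (fun d => d != 0) L &
    x = \sum_(d <- L) (tofrac d)^-1].
Proof.
case=> s; elim: s x => [|d s IHs] x /=; first by move=> _ ->; exists [::].
case/andP=> d0 s0 ->; rewrite big_cons.
have [L [uL L0 ->]] := IHs _ s0 erefl.
have [Ld [uLd Ld0 ->]] := inv_tofrac_egyptian_avoid L d0.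
exists (Ld ++ L); rewrite big_cat cat_uniq all_cat uLd uL L0 !andbT; split=> //.
  by apply/hasPn => l lL; apply/negP => /(allP Ld0) /andP[_]; rewrite lL.
by apply: sub_all Ld0 => l /andP[].
Qed.
End CharacteristicZero.

Section PrimeSubfield.
Variable D : idomainType.

(* [S] is the image of the prime field of [D]. *)
Lemma natr_unit_contains_field :
  (forall n : nat, (n%:R : D) != 0 -> (n%:R : D) \is a GRing.unit) -> contains_field D.
Proof.
move=> natr_unit.
have intr_unit (z : int) : (z%:~R : D) != 0 -> (z%:~R : D) \is a GRing.unit.
  by case: z => n; rewrite ?NegzE ?rmorphN ?oppr_eq0 ?unitrN /=; apply: natr_unit.
pose S := [pred x : D | `[< exists z k : int, (k%:~R : D) != 0 /\ x * k%:~R = z%:~R >]].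
exists S; split.
- by apply/asboolP; exists 1, 1; rewrite mulr1 oner_neq0.
- move=> x y /asboolP[z [k [k0 xk]]] /asboolP[w [l [l0 yl]]].
  apply/asboolP; exists (z * l - w * k), (k * l); rewrite !rmorphM /= mulf_neq0 //.
  by split=> //; rewrite rmorphB !rmorphM /= -xk -yl; ring.
- move=> x y /asboolP[z [k [k0 xk]]] /asboolP[w [l [l0 yl]]].
  apply/asboolP; exists (z * w), (k * l); rewrite !rmorphM /= mulf_neq0 //.
  by split=> //; rewrite -xk -yl; ring.
- move=> x /asboolP[z [k [k0 xk]]] x0.
  have z0 : (z%:~R : D) != 0 by rewrite -xk mulf_neq0.
  have zU := intr_unit z z0.
  exists (k%:~R / z%:~R); last by rewrite mulrA xk divrr.
  by apply/asboolP; exists k, z; rewrite divrK.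
Qed.

Lemma pchar_natr_unit p n :
  p \in [pchar D] -> (n%:R : D) != 0 -> (n%:R : D) \is a GRing.unit.
Proof.
move=> pcharDp n0; have p_pr := pcharf_prime pcharDp.
have /eqP cop : coprime p n by rewrite prime_coprime // (dvdn_pcharf pcharDp).
have [a _] := Bezoutl n (prime_gt0 p_pr); rewrite cop (dvdn_pcharf pcharDp).
rewrite natrD natrM mulrC addrC addr_eq0 => /eqP an_1.
by apply/unitrPr; exists (- a%:R); rewrite mulrN an_1 opprK.
Qed.

Lemma no_subfield_pchar0 : ~ contains_field D -> [pchar D] =i pred0.
Proof.
move=> noF; apply/pcharf0P => n; case: (posnP n) => [->|n_gt0]; rewrite ?eqxx //.
apply/negbTE/negP => /(natf0_pchar n_gt0) [p pcharDp].
by apply: noF; apply: natr_unit_contains_field => m; apply: pchar_natr_unit pcharDp.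
Qed.

Lemma no_subfield_natr_nonunit : ~ contains_field D ->
  exists n : nat, (n%:R : D) != 0 /\ (n%:R : D) \notin GRing.unit.
Proof.
move=> noF; apply: contrapT => allU; apply: noF; apply: natr_unit_contains_field.
by move=> n n0; apply: contrapT => nNU; apply: allU; exists n; split=> //; apply/negP.
Qed.
End PrimeSubfield.

Lemma fraction_tofrac_div (D : idomainType) (x : {fraction D}) :
  exists a b : D, b != 0 /\ x = tofrac a / tofrac b.
Proof.
elim/quotW: x => r; exists r.1, r.2; split; first exact: denom_ratioP.
apply: (canRL (mulfK _)); first by rewrite tofrac_eq0 denom_ratioP.
rewrite /tofrac; unlock; rewrite [_ * _]piE; apply/eqmodP.
rewrite /= FracField.equivfE /FracField.mulf /=.
by rewrite !numden_Ratio ?mulf_neq0 ?denom_ratioP ?oner_neq0 //; apply/eqP; ring.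
Qed.

Theorem corollary2p13 (D : idomainType) :
  euclidean_domain D -> ~ contains_field D -> egyptian D.
Proof.
move=> [f f_euclid] noF x _.
have [n [n0 nNU]] := no_subfield_natr_nonunit noF.
have [a [b [b0 ->]]] := fraction_tofrac_div x.
apply: (unit_fraction_sum_egyptian (no_subfield_pchar0 noF)).
apply: unit_fraction_sum_divr b0 _.
exact: (unit_fraction_sum_tofrac f_euclid a n0 nNU).
Qed.
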